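(* Let $p,q\geq 2$ be relatively prime integers, let $t>0$ and $k\geq 2t+1$ be integers, and let $w_1,w_2\in A_{pq}^k$. Then (1) if $\mathrm{int}(w_1)<q^{2t}$ then $\mathrm{int}(F_{p,q}^t(w_1))=0$; and (2) if $\mathrm{int}(w_2)\equiv\mathrm{int}(w_1)+q^{2t}\pmod{(pq)^k}$ then $\mathrm{int}(F_{p,q}^t(w_2))\equiv\mathrm{int}(F_{p,q}^t(w_1))+1\pmod{(pq)^{k-2t}}$.
   Context: For an integer $n>1$, $A_n=\{0,\dots,n-1\}$, and $A_n^k$ is the set of words of length $k$. Define $g_{p,q}:A_{pq}\times A_{pq}\to A_{pq}$ by writing $x=x_1q+x_0$, $y=y_1q+y_0$ with $x_0,y_0\in A_q$, $x_1,y_1\in A_p$ (uniquely), and $g_{p,q}(x,y)=x_0p+y_1$, and $f_{p,q}(x,a,y)=g_{p,q}(g_{p,q}(x,a),g_{p,q}(a,y))$. For a word $w=w(1)\cdots w(m)$ with $m\geq3$, $F_{p,q}(w)=u(1)\cdots u(m-2)$ with $u(i)=f_{p,q}(w(i),w(i+1),w(i+2))$, and for $m\geq 2t+1$, $F_{p,q}^t(w)=F_{p,q}(F_{p,q}^{t-1}(w))$, a word of length $m-2t$. For a nonempty word $w=w(1)\cdots w(m)$ over $A_{pq}$, $\mathrm{int}(w)=\sum_{i=0}^{m-1}w(m-i)(pq)^i$. *)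

From mathcomp Require Import all_boot.
Set Implicit Arguments. Unset Strict Implicit. Unset Printing Implicit Defensive.

Definition is_word (n k : nat) (w : seq nat) : bool :=
  (size w == k) && all (fun a => a < n) w.

(* g_{p,q}(x,y) = x0 * p + y1 where x = x1 q + x0, y = y1 q + y0,
   x0 = x mod q, y1 = y div q (valid for x,y in A_{pq}). *)
Definition g (p q x y : nat) : nat := (x %% q) * p + y %/ q.

Definition f (p q x a y : nat) : nat := g p q (g p q x a) (g p q a y).

(* F_{p,q}(w)(i) = f(w(i), w(i+1), w(i+2)), for i = 1..m-2 (0-indexed here). *)
Definition F (p q : nat) (w : seq nat) : seq nat :=
  [seq f p q (nth 0 w i) (nth 0 w i.+1) (nth 0 w i.+2) | i <- iota 0 (size w - 2)].

Definition Fiter (p q t : nat) (w : seq nat) : seq nat := iter t (F p q) w.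

(* int(w) = sum_{i=0}^{m-1} w(m-i) (pq)^i : base-pq value, most significant first. *)
Definition intw (p q : nat) (w : seq nat) : nat :=
  foldl (fun acc a => acc * (p * q) + a) 0 w.

(* Split every letter x < pq as x = x1 q + x0.  The map g glues the low digit x0 of one
   letter to the high digit y1 of the next, so on a word w of length n + 1 the map G that
   applies g to consecutive letters computes int(G w) = floor(int w / q) mod (pq)^n:
   dividing by q shifts every letter's (p, q)-digits by one place.  As F = G o G,
   int(F^t w) = floor(int w / q^(2t)) mod (pq)^(k - 2t), from which both claims follow
   by elementary arithmetic of quotients and remainders. *)

From mathcomp Require Import all_boot zify.
From mathcomp Require Import ring.

Set Implicit Arguments.
Unset Strict Implicit.
Unset Printing Implicit Defensive.

Section ShiftMap.

Variables p q : nat.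

Lemma foldl_intw acc s :
  foldl (fun acc a => acc * (p * q) + a) acc s = acc * (p * q) ^ size s + intw p q s.
Proof.
elim: s acc => [|a s IHs] acc /=; first by rewrite muln1 addn0.
by rewrite /intw /= !IHs add0n expnS; ring.
Qed.

Lemma intw_cons x s : intw p q (x :: s) = x * (p * q) ^ size s + intw p q s.
Proof. by rewrite /intw /= foldl_intw add0n. Qed.

Lemma intw_ltn n w : is_word (p * q) n w -> intw p q w < (p * q) ^ n.
Proof.
case/andP=> /eqP <-; elim: w => [|a s IHs] /=; first by rewrite /intw.
case/andP=> a_lt s_word; rewrite intw_cons expnS.
have := IHs s_word; nia.
Qed.

Fixpoint G (w : seq nat) : seq nat :=
  match w with
  | x :: ((y :: _) as s) => g p q x y :: G s
  | _ => [::]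
  end.

Lemma size_G w : size (G w) = (size w).-1.
Proof. by elim: w => [|x [|y s] IHs] //=; rewrite IHs. Qed.

Lemma nth_G w i : i < (size w).-1 -> nth 0 (G w) i = g p q (nth 0 w i) (nth 0 w i.+1).
Proof. by elim: w i => [|x [|y s] IHs] [|i] //= i_lt; rewrite IHs. Qed.

Hypothesis q_gt0 : 0 < q.

Lemma g_ltn x y : y < p * q -> g p q x y < p * q.
Proof.
move=> y_lt; have x0_lt : x %% q < q by rewrite ltn_mod.
have y1_lt : y %/ q < p by rewrite ltn_divLR // mulnC.
rewrite /g; nia.
Qed.

Lemma G_word n w : is_word (p * q) n.+1 w -> is_word (p * q) n (G w).
Proof.
case/andP=> /eqP size_w w_lt; rewrite /is_word size_G size_w eqxx /=.
elim: w {size_w} w_lt => [|x [|y s] IHs] //= /andP[_ /andP[y_lt s_lt]].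
by rewrite g_ltn //= IHs //= y_lt.
Qed.

Lemma F_G w : F p q w = G (G w).
Proof.
have size_FG : size (F p q w) = size (G (G w)).
  by rewrite size_map size_iota !size_G; lia.
apply: (@eq_from_nth _ 0 _ _ size_FG) => i; rewrite size_map size_iota => i_lt.
rewrite (nth_map 0) ?size_iota // nth_iota // add0n.
by rewrite !nth_G ?size_G //; lia.
Qed.

Lemma intw_G_head w : 0 < size w ->
  intw p q (G w) + head 0 w %/ q * (p * q) ^ (size w).-1 = intw p q w %/ q.
Proof.
elim: w => [|x [|y s] IHs] // _; first by rewrite /intw /= muln1.
have IHys : intw p q (G (y :: s)) + y %/ q * (p * q) ^ size s = intw p q (y :: s) %/ q.
  exact: IHs.
change (G _) with (g p q x y :: G (y :: s)).
rewrite intw_cons size_G [in RHS]intw_cons [size (y :: s)]/= expnS.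
rewrite (_ : x * _ = x * p * (p * q) ^ size s * q); last by ring.
rewrite divnMDl // -IHys /g [in x * p](divn_eq x q) /=; ring.
Qed.

Lemma intw_G n w : is_word (p * q) n.+1 w -> intw p q (G w) = intw p q w %/ q %% (p * q) ^ n.
Proof.
move=> w_word; have /andP[/eqP size_w _] := w_word.
rewrite -intw_G_head ?size_w //= addnC modnMDl modn_small //.
exact/intw_ltn/G_word.
Qed.

Lemma intw_F n w : is_word (p * q) n.+2 w ->
  intw p q (F p q w) = intw p q w %/ q ^ 2 %% (p * q) ^ n.
Proof.
move=> w_word; rewrite F_G (intw_G (G_word w_word)) (intw_G w_word).
rewrite modn_divl modn_dvdm; last by rewrite expnSr dvdn_mul ?dvdn_mull.
by rewrite -modn_divl -divnMA mulnn.
Qed.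

Lemma Fiter_word_intw t n w : is_word (p * q) (n + 2 * t) w ->
  is_word (p * q) n (Fiter p q t w) /\
  intw p q (Fiter p q t w) = intw p q w %/ q ^ (2 * t) %% (p * q) ^ n.
Proof.
elim: t n => [|t IHt] n; rewrite ?muln0 ?addn0 => w_word.
  by split=> //; rewrite expn0 divn1 modn_small // (intw_ltn w_word).
have [Fw_word intw_Fw] : is_word (p * q) n.+2 (Fiter p q t w) /\
    intw p q (Fiter p q t w) = intw p q w %/ q ^ (2 * t) %% (p * q) ^ n.+2.
  by apply: IHt; rewrite mulnS addnA addn2 in w_word.
rewrite /Fiter iterS -/(Fiter p q t w).
split; first by rewrite F_G; apply/G_word/G_word.
rewrite (intw_F Fw_word) intw_Fw modn_divl modn_dvdm; last first.
  by rewrite -[n.+2]addn2 expnD dvdn_mul // expnMn dvdn_mull.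
by rewrite -modn_divl -divnMA -expnD mulnS [2 + _]addnC.
Qed.

End ShiftMap.

Lemma divn_shift_mod a b d n m : 0 < d -> d * n %| m ->
  b = a + d %[mod m] -> b %/ d = a %/ d + 1 %[mod n].
Proof.
move=> d_gt0; rewrite mulnC => nd_dvd_m b_eq.
have b_eq_nd : b = a + d %[mod n * d].
  by rewrite -(modn_dvdm b nd_dvd_m) b_eq modn_dvdm.
by rewrite !modn_divl b_eq_nd -modn_divl divnDr // divnn d_gt0.
Qed.

Theorem lemma10 (p q t k : nat) (w1 w2 : seq nat) :
  2 <= p -> 2 <= q -> coprime p q -> 0 < t -> 2 * t + 1 <= k ->
  is_word (p * q) k w1 -> is_word (p * q) k w2 ->
  (intw p q w1 < q ^ (2 * t) -> intw p q (Fiter p q t w1) = 0) /\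
  (intw p q w2 = intw p q w1 + q ^ (2 * t) %[mod (p * q) ^ k] ->
   intw p q (Fiter p q t w2) = intw p q (Fiter p q t w1) + 1 %[mod (p * q) ^ (k - 2 * t)]).
Proof.
move=> _ q_ge2 _ _ k_ge w1_word w2_word.
have q_gt0 : 0 < q by lia.
set n := k - 2 * t.
have k_eq : k = n + 2 * t by rewrite /n; lia.
rewrite k_eq in w1_word w2_word *.
have [_ ->] := Fiter_word_intw q_gt0 w1_word.
have [_ ->] := Fiter_word_intw q_gt0 w2_word.
split=> [w1_lt | w2_eq]; first by rewrite divn_small ?mod0n.
rewrite modn_mod modnDml; apply: (divn_shift_mod _ _ w2_eq); first by rewrite expn_gt0 q_gt0.
by rewrite expnD mulnC dvdn_mul // expnMn dvdn_mull.
Qed.
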